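(* For all integers $r\ge3$ and $n\ge4$, $\chi_D(K_r^{\times n})=r+1$.
   Context: $K_r$ is the complete graph on $r$ vertices. The weak (direct) product $G\times H$ has vertex set $V(G)\times V(H)$, with $(g_1,h_1)$ adjacent to $(g_2,h_2)$ iff $g_1g_2\in E(G)$ and $h_1h_2\in E(H)$; $K_r^{\times n}$ is the $n$-fold weak product of $K_r$ with itself. A coloring is distinguishing if the only graph automorphism mapping every color class onto itself is the identity; $\chi_D(G)$ is the minimum number of colors of a proper distinguishing coloring of $G$. *)

From mathcomp Require Import all_boot all_fingroup.
Set Implicit Arguments. Unset Strict Implicit. Unset Printing Implicit Defensive.

Definition K_adj (r : nat) : rel 'I_r := fun a b => a != b.

(* n-fold weak (direct) product of K_r: vertices are n-tuples of vertices of K_r,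
   adjacent iff adjacent in every coordinate. *)
Definition Kpow_vertex (r n : nat) := {ffun 'I_n -> 'I_r}.
Definition Kpow_adj (r n : nat) : rel (Kpow_vertex r n) :=
  fun u v => [forall i, K_adj (u i) (v i)].

Definition is_graph_aut (T : finType) (adj : rel T) (f : {perm T}) : Prop :=
  forall x y, adj (f x) (f y) = adj x y.

Definition proper_coloring (T : finType) (adj : rel T) (k : nat) (c : T -> 'I_k) : Prop :=
  forall x y, adj x y -> c x != c y.

Definition distinguishing (T : finType) (adj : rel T) (k : nat) (c : T -> 'I_k) : Prop :=
  forall f : {perm T}, is_graph_aut adj f -> (forall x, c (f x) = c x) -> f = 1%g.

Definition has_proper_dist_coloring (T : finType) (adj : rel T) (k : nat) : Prop :=
  exists c : T -> 'I_k, proper_coloring adj c /\ distinguishing adj c.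

Definition chi_D_eq (T : finType) (adj : rel T) (m : nat) : Prop :=
  has_proper_dist_coloring adj m /\
  forall k, has_proper_dist_coloring adj k -> m <= k.

From mathcomp Require Import all_boot all_fingroup ssralg zmodp zify.
Set Implicit Arguments. Unset Strict Implicit. Unset Printing Implicit Defensive.
Import GRing.Theory.

(* Lower bound: a proper coloring of K_r^n uses at least r colors (the constant vertices form
   a clique).  With exactly r colors every color class is a maximum independent set, and by the
   Greenwell--Lovasz theorem these are the fibers {x | x i = a}; disjoint fibers lie over the same
   coordinate i, so swapping two values in another coordinate is a nontrivial automorphism
   preserving all colors.  The Greenwell--Lovasz theorem is proved by an exchange argument: a
   maximum independent set meets each "permuted diagonal" {(pi_j t)_j | t} exactly once, which
   forces it to be closed under changing one coordinate as soon as one such change stays inside.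

   Upper bound: color x by x_0, except for a set R inside the fiber {x_0 = 0} which gets the extra
   color.  R consists of the vertices whose defect sum_{j > 0} (p - x_j) is at least p + 2, plus
   the special vertices of defect p + 1 with value 0 at a coordinate a and p - 1 at a coordinate
   b > a.  A color-preserving automorphism permutes the fibers; it fixes those over coordinate 0
   because they are color classes, and over a coordinate j > 0 the number of vertices of R in the
   fiber {x_j = b} strictly decreases in b and, at b = 0, in j, so it fixes these fibers too. *)

Lemma sum_card_classes (T I : finType) (c : T -> I) :
  \sum_(a : I) #|[set x | c x == a]| = #|T|.
Proof.
rewrite -sum1_card (partition_big c predT) //=.
by apply: eq_bigr => a _; rewrite -sum1_card; apply: eq_bigl => x; rewrite inE.
Qed.

Lemma sum_eq_bound (I : finType) (f : I -> nat) (m : nat) :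
  (forall i, f i <= m) -> \sum_i f i = #|I| * m -> forall i, f i = m.
Proof.
move=> le_f sum_f i; have /leqif_sum eq_sum := fun j (_ : true) => leqif_eq (le_f j).
move: eq_sum => /= [_]; rewrite sum_f sum_nat_const eqxx.
by move=> /esym /forallP /(_ i) /eqP.
Qed.

Lemma discrete_ivt (P : nat -> bool) N :
  P 0 -> ~~ P N -> exists m, [/\ m < N, P m & ~~ P m.+1].
Proof.
move=> P0; elim: N => [|N IH] PN; first by rewrite P0 in PN.
case: (boolP (P N)) => PN'; first by exists N.
by have [m [? ? ?]] := IH PN'; exists m; split=> //; rewrite ltnS ltnW.
Qed.

Lemma incr_ord_id m (s : 'I_m.+1 -> 'I_m.+1) : {homo s : a b / a < b} -> s =1 id.
Proof.
move=> s_incr.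
have ge : forall l (a : 'I_m.+1), a = l :> nat -> a <= s a.
  elim=> [|l IH] a al; first by rewrite al.
  have lm : l < m.+1 by have := ltn_ord a; lia.
  have := IH (inord l) (inordK lm); have := s_incr (inord l) a.
  by rewrite inordK // al ltnSn => /(_ isT); lia.
have le : forall l (a : 'I_m.+1), a + l = m :> nat -> s a <= a.
  elim=> [|l IH] a al; first by have := ltn_ord (s a); lia.
  have am : a.+1 < m.+1 by lia.
  have := IH (inord a.+1); rewrite inordK // => /(_ (etrans (addSnnS _ _) al)).
  by have := s_incr a (inord a.+1); rewrite inordK // ltnSn => /(_ isT); lia.
move=> a; apply/val_inj/eqP; rewrite eqn_leq (le (m - a)) ?(ge a) //.
by have := ltn_ord a; lia.
Qed.

Lemma ord_neq0 m (i : 'I_m.+1) : (i != ord0) = (0 < i).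
Proof. by rewrite -val_eqE lt0n. Qed.

Section Fibers.
Variables p k : nat.
Local Notation r := p.+1.
Local Notation n := k.+1.
Local Notation V := (Kpow_vertex r n).
Local Notation adj := (@Kpow_adj r n).
Hypothesis r_ge3 : 1 < p.

Definition other (u w : 'I_r) : 'I_r := odflt ord0 [pick c | (c != u) && (c != w)].

Lemma other_neq u w : (other u w != u) && (other u w != w).
Proof.
rewrite /other; case: pickP => [c //|none].
have : 0 < #|~: [set u; w]| by rewrite cardsCs setCK card_ord cards2; case: (u != w); lia.
by rewrite card_gt0 => /set0Pn [c]; rewrite !inE negb_or none.
Qed.

Definition independent (I : {set V}) := {in I &, forall x y, ~~ adj x y}.
Definition fiber (i : 'I_n) (a : 'I_r) : {set V} := [set x : V | x i == a].
Definition alpha := #|fiber ord0 ord0|.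
Definition upd (x : V) (i : 'I_n) (a : 'I_r) : V := [ffun j => if j == i then a else x j].
Definition swap_coords (i j : 'I_n) (x : V) : V := [ffun l => x (tperm i j l)].

Lemma adjE x y : adj x y = [forall i, x i != y i].
Proof. by []. Qed.

Lemma in_fiber x i a : (x \in fiber i a) = (x i == a).
Proof. by rewrite inE. Qed.

Lemma updE x i a j : upd x i a j = if j == i then a else x j.
Proof. by rewrite ffunE. Qed.

Lemma upd_id x i : upd x i (x i) = x.
Proof. by apply/ffunP=> j; rewrite updE; case: eqP => // ->. Qed.

Lemma upd_upd x i a b : upd (upd x i a) i b = upd x i b.
Proof. by apply/ffunP=> j; rewrite !updE; case: (j == i). Qed.

Lemma swap_coordsK i j : involutive (swap_coords i j).
Proof. by move=> x; apply/ffunP=> l; rewrite !ffunE tpermK. Qed.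

Lemma fiber_independent i a : independent (fiber i a).
Proof.
move=> x y; rewrite !in_fiber => /eqP xi /eqP yi; rewrite adjE.
by apply/forallPn; exists i; rewrite xi yi eqxx.
Qed.

Lemma fiber_subset i a j b : fiber i a \subset fiber j b -> i = j /\ a = b.
Proof.
move=> /subsetP sub_ab; have /andP [b'b _] := other_neq b b.
have ij : i = j.
  apply/eqP/negP=> /negP ij; rewrite eq_sym in ij.
  have := sub_ab [ffun l => if l == i then a else other b b].
  by rewrite !in_fiber !ffunE eqxx (negbTE ij) (negbTE b'b) => /(_ (eqxx a)).
split=> //; subst j.
by have := sub_ab [ffun _ => a]; rewrite !in_fiber !ffunE eqxx => /(_ isT)/eqP.
Qed.

Lemma fiber_inj i a j b : fiber i a = fiber j b -> i = j /\ a = b.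
Proof. by move=> eq_ij; apply: fiber_subset; rewrite eq_ij. Qed.

Lemma fiber_disjoint i a j b : fiber i a :&: fiber j b = set0 -> i = j.
Proof.
move=> disj; apply/eqP/negP=> /negP ij; rewrite eq_sym in ij.
have : [ffun l => if l == i then a else b] \in fiber i a :&: fiber j b.
  by rewrite inE !in_fiber !ffunE (negbTE ij) !eqxx.
by rewrite disj inE.
Qed.

Lemma upd_fiber_inj i a b : {in fiber i a &, injective (fun x => upd x i b)}.
Proof.
move=> x y; rewrite !in_fiber => /eqP xi /eqP yi /(congr1 (fun x => upd x i a)).
by rewrite !upd_upd -{1}xi -yi !upd_id.
Qed.

Lemma card_fiber_val i a b : #|fiber i a| = #|fiber i b|.
Proof.
suff le_card c c' : #|fiber i c| <= #|fiber i c'| by apply/eqP; rewrite eqn_leq !le_card.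
rewrite -(card_in_imset (upd_fiber_inj (i := i) (a := c) (b := c'))).
apply/subset_leq_card/subsetP=> _ /imsetP [x _ ->].
by rewrite in_fiber updE eqxx.
Qed.

Lemma card_fiber_coord i j a : #|fiber i a| = #|fiber j a|.
Proof.
have -> : fiber j a = swap_coords i j @: fiber i a.
  apply/setP=> y; apply/idP/imsetP => [|[x]].
    rewrite in_fiber => yj; exists (swap_coords i j y); last by rewrite swap_coordsK.
    by rewrite in_fiber ffunE tpermL.
  by rewrite !in_fiber => xi ->; rewrite ffunE tpermR.
by rewrite (card_imset _ (can_inj (swap_coordsK i j))).
Qed.

Lemma card_fiber i a : #|fiber i a| = alpha.
Proof. by rewrite /alpha (card_fiber_coord i ord0) (card_fiber_val _ _ ord0). Qed.

Lemma card_vertices : #|V| = r * alpha.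
Proof.
rewrite -(sum_card_classes (fun x : V => x ord0)).
rewrite (eq_bigr (fun=> alpha)) ?sum_nat_const ?card_ord // => a _.
by rewrite -(card_fiber ord0 a).
Qed.

Definition normalize (x : V) : V := [ffun j => (x j - x ord0)%R].

(* Two vertices of an independent set agree in some coordinate, so they cannot differ by a
   constant vector. *)
Lemma normalize_inj I : independent I -> {in I &, injective normalize}.
Proof.
move=> indI x y xI yI /ffunP eq_xy.
have diff_eq j : (x j - y j = x ord0 - y ord0)%R.
  have := eq_xy j; rewrite !ffunE => e.
  have -> : x j = (y j - y ord0 + x ord0)%R by rewrite -e subrK.
  by rewrite addrAC [X in (X + _)%R]addrAC subrr add0r addrC.
have [x0y0|x0y0] := eqVneq (x ord0) (y ord0).
  by apply/ffunP=> j; apply/eqP; rewrite -subr_eq0 diff_eq x0y0 subrr.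
have := indI x y xI yI; rewrite adjE negb_forall => /existsP [j]; rewrite negbK => /eqP xyj.
by move: (diff_eq j); rewrite xyj subrr => /esym/eqP; rewrite subr_eq0 (negbTE x0y0).
Qed.

Lemma normalize_sub (I : {set V}) : normalize @: I \subset fiber ord0 0%R.
Proof. by apply/subsetP=> _ /imsetP [x _ ->]; rewrite in_fiber ffunE subrr. Qed.

Lemma independent_card_le I : independent I -> #|I| <= alpha.
Proof.
move=> indI; rewrite -(card_in_imset (normalize_inj indI)) -(card_fiber ord0 0%R).
exact: subset_leq_card (normalize_sub I).
Qed.

Lemma max_independent_diagonal I : independent I -> #|I| = alpha ->
  exists t, [ffun _ => t] \in I.
Proof.
move=> indI cardI.
have : [ffun _ => 0%R] \in normalize @: I.
  have /eqP -> : normalize @: I == fiber ord0 0%R.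
    by rewrite eqEcard normalize_sub (card_in_imset (normalize_inj indI)) cardI card_fiber leqnn.
  by rewrite in_fiber ffunE.
move=> /imsetP [x xI /ffunP norm_x]; exists (x ord0).
suff -> : [ffun _ => x ord0] = x by [].
by apply/ffunP=> j; have := norm_x j; rewrite !ffunE => /esym/eqP; rewrite subr_eq0 => /eqP.
Qed.

Definition perm_coords (pi : 'I_n -> {perm 'I_r}) (x : V) : V := [ffun j => pi j (x j)].

Lemma perm_coords_inj pi : injective (perm_coords pi).
Proof. by move=> x y /ffunP e; apply/ffunP=> j; have := e j; rewrite !ffunE => /perm_inj. Qed.

Lemma adj_perm_coords pi x y : adj (perm_coords pi x) (perm_coords pi y) = adj x y.
Proof. by rewrite !adjE; apply: eq_forallb => j; rewrite !ffunE (inj_eq perm_inj). Qed.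

Lemma max_independent_meets_perm_diagonal I pi : independent I -> #|I| = alpha ->
  exists t, perm_coords pi [ffun _ => t] \in I.
Proof.
move=> indI cardI.
have indJ : independent (perm_coords pi @^-1: I).
  by move=> x y; rewrite !inE => xI yI; rewrite -(adj_perm_coords pi) indI.
have [|t] := max_independent_diagonal indJ; last by rewrite inE; exists t.
by rewrite card_preimset //; apply: perm_coords_inj.
Qed.

Lemma independent_perm_diagonal_uniq I pi t t' : independent I ->
  perm_coords pi [ffun _ => t] \in I -> perm_coords pi [ffun _ => t'] \in I -> t = t'.
Proof.
move=> indI tI t'I; apply/eqP/negPn/negP=> tt'.
have := indI _ _ tI t'I; rewrite adj_perm_coords adjE => /forallPn [j].
by rewrite !ffunE tt'.
Qed.

Definition z1 : 'I_r := other ord0 ord0.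

Lemma z1_neq0 : z1 != ord0.
Proof. by case/andP: (other_neq ord0 ord0). Qed.

Lemma perm_diagonal_count I pi : independent I -> #|I| = alpha ->
  let w t := perm_coords pi [ffun _ => t] in
  (w ord0 \in I) + (w z1 \in I) = ~~ [exists t, [&& t != ord0, t != z1 & w t \in I]] :> nat.
Proof.
move=> indI cardI w; have uniq_w := independent_perm_diagonal_uniq (pi:=pi) indI.
have notin s t : w t \in I -> s != t -> (w s \in I) = false.
  by move=> wt st; apply/negbTE/negP=> ws; move: st; rewrite (uniq_w _ _ ws wt) eqxx.
case: existsP => [[t /and3P [t0 t1 wt]]|none].
  by rewrite (notin ord0 t) ?(notin z1 t) // eq_sym.
have [t wt] := max_independent_meets_perm_diagonal pi indI cardI.
have /orP [/eqP t0|/eqP t1] : (t == ord0) || (t == z1).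
  by apply/negPn/negP=> /norP [t0 t1]; apply: none; exists t; rewrite t0 t1.
  by rewrite t0 in wt; rewrite wt (notin z1 ord0) // z1_neq0.
by rewrite t1 in wt; rewrite wt (notin ord0 z1) // eq_sym z1_neq0.
Qed.

Definition perm2 (a b : 'I_r) : {perm 'I_r} := (tperm ord0 a * tperm (tperm ord0 a z1) b)%g.

Lemma perm2_0 a b : a != b -> perm2 a b ord0 = a.
Proof.
move=> ab; rewrite permM tpermL; apply: tpermD; last by rewrite eq_sym.
by rewrite -{2}(tpermL ord0 a) (inj_eq perm_inj) z1_neq0.
Qed.

Lemma perm2_1 a b : perm2 a b z1 = b.
Proof. by rewrite permM tpermL. Qed.

(* The two permuted diagonals below only differ at [ord0] and [z1], where they visit the four
   vertices of the exchange; each meets [I] exactly once. *)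
Lemma max_independent_exchange_sep I i (a b : 'I_r) (x y : V) :
  independent I -> #|I| = alpha -> a != b -> (forall j, j != i -> x j != y j) ->
  (upd x i a \in I) + (upd y i b \in I) = (upd x i b \in I) + (upd y i a \in I) :> nat.
Proof.
move=> indI cardI ab xy.
pose pi j := if j == i then perm2 a b else perm2 (x j) (y j).
pose pi' j := if j == i then (tperm ord0 z1 * perm2 a b)%g else pi j.
have coordE j t pj : perm_coords pj [ffun _ => t] j = pj j t by rewrite !ffunE.
have xa : perm_coords pi [ffun _ => ord0] = upd x i a.
  apply/ffunP=> j; rewrite coordE updE /pi; case: eqVneq => [_|ji]; first exact: perm2_0.
  exact: perm2_0 (xy _ ji).
have yb : perm_coords pi [ffun _ => z1] = upd y i b.
  by apply/ffunP=> j; rewrite coordE updE /pi; case: eqP; rewrite perm2_1.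
have xb : perm_coords pi' [ffun _ => ord0] = upd x i b.
  apply/ffunP=> j; rewrite coordE updE /pi' /pi; case: eqVneq => [_|ji].
    by rewrite permM tpermL perm2_1.
  exact: perm2_0 (xy _ ji).
have ya : perm_coords pi' [ffun _ => z1] = upd y i a.
  apply/ffunP=> j; rewrite coordE updE /pi' /pi; case: eqVneq => _.
    by rewrite permM tpermR perm2_0.
  by rewrite perm2_1.
have same t : t != ord0 -> t != z1 ->
    perm_coords pi [ffun _ => t] = perm_coords pi' [ffun _ => t].
  rewrite !(eq_sym t) => t0 t1; apply/ffunP=> j.
  by rewrite !coordE /pi' /pi; case: eqP => // _; rewrite [RHS]permM tpermD.
rewrite -xa -yb -xb -ya !perm_diagonal_count //; congr (nat_of_bool (~~ _)).
apply: eq_existsb => t; case: (eqVneq t ord0) => //= t0; case: (eqVneq t z1) => //= t1.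
by rewrite same.
Qed.

Lemma max_independent_exchange I i (a b : 'I_r) (x y : V) : independent I -> #|I| = alpha ->
  (upd x i a \in I) + (upd y i b \in I) = (upd x i b \in I) + (upd y i a \in I) :> nat.
Proof.
move=> indI cardI; have [->|ab] := eqVneq a b; first by rewrite addnC.
pose s : V := [ffun j => other (x j) (y j)].
have xs j : j != i -> x j != s j.
  by move=> _; rewrite ffunE eq_sym; case/andP: (other_neq (x j) (y j)).
have sy j : j != i -> s j != y j by move=> _; rewrite ffunE; case/andP: (other_neq (x j) (y j)).
have := max_independent_exchange_sep indI cardI ab xs.
have := max_independent_exchange_sep indI cardI ab sy.
lia.
Qed.

Lemma upd_boundary (I : {set V}) x y : x \in I -> y \notin I ->
  exists i a b z, upd z i a \in I /\ upd z i b \notin I.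
Proof.
move=> xI yI; pose mix m : V := [ffun j : 'I_n => if j < m then y j else x j].
have mix0 : mix 0 = x by apply/ffunP=> j; rewrite ffunE.
have mixn : mix n = y by apply/ffunP=> j; rewrite ffunE ltn_ord.
have [m [mn mixI mixI']] : exists m, [/\ m < n, mix m \in I & mix m.+1 \notin I].
  by apply: (discrete_ivt (P := fun m => mix m \in I)); rewrite ?mix0 ?mixn.
pose i := Ordinal mn; exists i, (x i), (y i), (mix m).
have mix_i : mix m i = x i by rewrite ffunE ltnn.
split; first by rewrite -mix_i upd_id.
suff -> : upd (mix m) i (y i) = mix m.+1 by [].
apply/ffunP=> j; rewrite updE !ffunE ltnS.
have [-> | ji] := eqVneq j i; first by rewrite /= leqnn.
by rewrite -val_eqE /= in ji; rewrite [j <= m]leq_eqVlt (negbTE ji).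
Qed.

Lemma max_independent_fiber I : independent I -> #|I| = alpha -> exists i a, I = fiber i a.
Proof.
move=> indI cardI; have [x xI] : exists x, x \in I.
  apply/set0Pn; rewrite -card_gt0 cardI -(card_fiber ord0 ord0) card_gt0.
  by apply/set0Pn; exists [ffun _ => ord0]; rewrite in_fiber ffunE.
pose y : V := [ffun j => other (x j) (x j)].
have yI : y \notin I.
  apply/negP=> yI; have /negP := indI _ _ xI yI; apply; rewrite adjE.
  by apply/forallP=> j; rewrite ffunE eq_sym; case/andP: (other_neq (x j) (x j)).
have [i [a [b [z [zaI zbI]]]]] := upd_boundary xI yI.
exists i, a; apply/eqP; rewrite eq_sym eqEcard cardI card_fiber leqnn andbT.
apply/subsetP=> w; rewrite in_fiber => /eqP wi.
have := max_independent_exchange i a b z w indI cardI.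
by rewrite zaI (negbTE zbI) -wi upd_id; case: (w \in I).
Qed.

Lemma aut_fiber_image (f : {perm V}) i a : is_graph_aut adj f ->
  exists j b, f @: fiber i a = fiber j b.
Proof.
move=> f_aut; apply: max_independent_fiber.
  by move=> _ _ /imsetP [x xF ->] /imsetP [y yF ->]; rewrite f_aut (fiber_independent xF).
by rewrite card_imset ?card_fiber //; apply: perm_inj.
Qed.

(* Disjoint fibers have disjoint images, so all fibers over one coordinate are sent to
   fibers over one coordinate. *)
Lemma aut_fibers (f : {perm V}) i : is_graph_aut adj f ->
  exists j (s : 'I_r -> 'I_r), forall a, f @: fiber i a = fiber j (s a).
Proof.
move=> f_aut; have [j [b0 F0]] := aut_fiber_image i ord0 f_aut.
suff /fin_all_exists [s Fs] : forall a, exists b, f @: fiber i a = fiber j b by exists j, s.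
move=> a; have [j' [b Fa]] := aut_fiber_image i a f_aut; exists b; rewrite Fa.
suff -> : j' = j by [].
have [a0|a0] := eqVneq a ord0; first by move: Fa; rewrite a0 F0 => /esym/fiber_inj [].
apply: (fiber_disjoint (a := b) (b := b0)).
rewrite -Fa -F0 -(imsetI (in2W (@perm_inj _ f))); apply/eqP; rewrite imset_eq0; apply/eqP/setP=> x.
by rewrite !inE; case: eqP => // ->; rewrite (negbTE a0).
Qed.

Lemma perm_fixing_fibers (f : {perm V}) :
  (forall i a, f @: fiber i a = fiber i a) -> f = 1%g.
Proof.
move=> fixF; apply/permP=> x; apply/ffunP=> i; rewrite perm1.
have : f x \in f @: fiber i (x i) by rewrite imset_f // in_fiber.
by rewrite fixF in_fiber => /eqP.
Qed.

End Fibers.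

Section LowerBound.
Variables p k : nat.
Hypothesis r_ge3 : 1 < p.
Hypothesis n_ge2 : 0 < k.
Local Notation r := p.+1.
Local Notation n := k.+1.
Local Notation V := (Kpow_vertex r n).
Local Notation adj := (@Kpow_adj r n).

Lemma proper_coloring_ge m (c : V -> 'I_m) : proper_coloring adj c -> r <= m.
Proof.
move=> c_proper; rewrite -[r]card_ord -[m]card_ord.
apply: (@leq_card _ _ (fun t => c [ffun _ => t])) => t t' ctt'; apply/eqP/negPn/negP=> tt'.
have /c_proper : adj [ffun _ => t] [ffun _ => t'] by apply/forallP=> j; rewrite !ffunE.
by rewrite ctt' eqxx.
Qed.

Lemma color_class_independent m (c : V -> 'I_m) a :
  proper_coloring adj c -> independent [set x | c x == a].
Proof.
move=> c_proper x y; rewrite !inE => /eqP cx /eqP cy; apply/negP=> /c_proper.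
by rewrite cx cy eqxx.
Qed.

Lemma proper_r_coloring_coord (c : V -> 'I_r) : proper_coloring adj c ->
  exists i, forall x y : V, x i = y i -> c x = c y.
Proof.
move=> c_proper; pose C a := [set x | c x == a].
have C_indep a : independent (C a) := color_class_independent (a := a) c_proper.
have C_card : forall a, #|C a| = alpha p k.
  apply: sum_eq_bound => [a|]; first exact: independent_card_le (C_indep a).
  by rewrite sum_card_classes card_ord card_vertices.
have C_fiber a := max_independent_fiber r_ge3 (C_indep a) (C_card a).
have [i [b Cb]] := C_fiber (c [ffun _ => ord0]); exists i.
have C_at x : C (c x) = fiber i (x i).
  have [i' [b' Cx]] := C_fiber (c x).
  have i'i : i' = i.
    have [cx0|cx0] := eqVneq (c x) (c [ffun _ => ord0]).
      by move: Cx; rewrite cx0 Cb => /(fiber_inj r_ge3) [->].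
    apply: (fiber_disjoint (a := b') (b := b)); rewrite -Cx -Cb; apply/setP=> z.
    by rewrite !inE; apply/negP=> /andP [/eqP -> /eqP]; apply/eqP.
  have : x \in C (c x) by rewrite inE.
  by rewrite Cx in_fiber => /eqP xb'; rewrite -xb' i'i.
move=> x y xy; have : y \in C (c x) by rewrite C_at in_fiber xy.
by rewrite inE => /eqP.
Qed.

Lemma proper_distinguishing_gt m (c : V -> 'I_m) :
  proper_coloring adj c -> distinguishing adj c -> r < m.
Proof.
move=> c_proper c_dist; rewrite ltn_neqAle (proper_coloring_ge c_proper) andbT.
apply/eqP=> rm; subst m; have [i c_coord] := proper_r_coloring_coord c_proper.
pose j : 'I_n := if i == ord0 then ord_max else ord0.
have ji : j != i.
  rewrite /j; case: (eqVneq i ord0) => [->|i0]; last by rewrite eq_sym.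
  by rewrite -val_eqE /= -lt0n.
pose pi l := if l == j then tperm ord0 (z1 p) else 1%g.
pose g := perm (@perm_coords_inj p k pi).
have g_aut : is_graph_aut adj g by move=> x y; rewrite !permE adj_perm_coords.
have : g = 1%g.
  apply: (c_dist g g_aut) => x; apply: c_coord; rewrite permE ffunE /pi.
  by rewrite eq_sym (negbTE ji) perm1.
move=> /permP /(_ [ffun _ => ord0]) /ffunP /(_ j).
rewrite permE perm1 !ffunE /pi eqxx tpermL => /eqP.
by rewrite (negbTE (z1_neq0 r_ge3)).
Qed.

End LowerBound.

Section UpperBound.
Variables p k : nat.
Hypothesis r_ge3 : 1 < p.
Hypothesis n_ge4 : 2 < k.
Local Notation r := p.+1.
Local Notation n := k.+1.
Local Notation V := (Kpow_vertex r n).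
Local Notation adj := (@Kpow_adj r n).

Definition defect (x : V) : nat := \sum_(j | j != ord0) (p - x j).
Definition top : V := [ffun j => if j == ord0 then ord0 else ord_max].
Definition top1 : 'I_r := inord p.-1.
Definition special (a b : 'I_n) : V := upd (upd top a ord0) b top1.
Definition is_special (x : V) :=
  [exists a : 'I_n, exists b : 'I_n, [&& 0 < a, a < b & x == special a b]].
Definition extra : {set V} :=
  [set x : V | (x ord0 == ord0) && ((p.+2 <= defect x) || is_special x)].
Definition extra_coloring (x : V) : 'I_r.+1 :=
  if x \in extra then ord_max else widen_ord (leqnSn r) (x ord0).
Definition count_extra (j : 'I_n) (b : 'I_r) := #|extra :&: fiber j b|.

Lemma top1E : top1 = p.-1 :> nat.
Proof. by rewrite inordK //; lia. Qed.

Lemma defect_top : defect top = 0.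
Proof. by rewrite /defect big1 // => j j0; rewrite ffunE (negbTE j0) /= subnn. Qed.

Lemma defect_upd (x : V) j v : j != ord0 -> defect (upd x j v) + (p - x j) = defect x + (p - v).
Proof.
move=> j0; rewrite /defect (bigD1 j j0) [in RHS](bigD1 j j0) /= updE eqxx.
rewrite (eq_bigr (fun l => p - x l)) => [|l /andP [_ lj]]; last by rewrite updE (negbTE lj).
by rewrite addnAC [RHS]addnAC (addnC (p - v)).
Qed.

Lemma specialE (a b l : 'I_n) :
  special a b l = if l == b then top1 else if l == a then ord0 else top l.
Proof. by rewrite !updE. Qed.

Lemma special_props (a b : 'I_n) : 0 < a -> a < b ->
  special a b ord0 = ord0 /\ defect (special a b) = p.+1.
Proof.
rewrite -!ord_neq0 => a0 ab; have b0 : b != ord0 by rewrite ord_neq0; lia.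
have ba : b != a by rewrite -val_eqE /=; lia.
split; first by rewrite specialE ffunE eqxx !(eq_sym ord0) (negbTE a0) (negbTE b0).
have := defect_upd top ord0 a0; have := defect_upd (upd top a ord0) top1 b0.
rewrite /special defect_top updE (negbTE ba) !ffunE (negbTE a0) (negbTE b0) top1E /=; lia.
Qed.

Lemma is_special_props (x : V) : is_special x -> x ord0 = ord0 /\ defect x = p.+1.
Proof. by move=> /existsP [a /existsP [b /and3P [a0 ab /eqP ->]]]; apply: special_props. Qed.

Lemma extra_coloring_proper : proper_coloring adj extra_coloring.
Proof.
move=> x y; rewrite adjE => /forallP /(_ ord0) xy0; rewrite /extra_coloring.
have top_neq (a : 'I_r) : ord_max != widen_ord (leqnSn r) a.
  by rewrite -val_eqE /= neq_ltn ltn_ord orbT.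
case: ifP => [|_]; case: ifP => [|_] //; rewrite ?inE.
- by move=> /andP [/eqP y0 _] /andP [/eqP x0 _]; rewrite x0 y0 eqxx in xy0.
- by move=> _; rewrite eq_sym top_neq.
Qed.

Lemma extra_coloring_class_max : [set x | extra_coloring x == ord_max] = extra.
Proof.
apply/setP=> x; rewrite inE /extra_coloring; case: (x \in extra); first by rewrite eqxx.
by apply/negbTE; rewrite -val_eqE /= neq_ltn ltn_ord.
Qed.

Lemma extra_coloring_class a : a != ord0 ->
  [set x | extra_coloring x == widen_ord (leqnSn r) a] = fiber ord0 a.
Proof.
move=> a0; apply/setP=> x; rewrite inE in_fiber /extra_coloring -val_eqE /=.
case: ifP => [/[!inE] /andP [/eqP -> _]|_] //=.
by rewrite gtn_eqF // eq_sym (negbTE a0).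
Qed.

Lemma two_other_coords (j : 'I_n) : exists j1 j2 : 'I_n, [/\ 0 < j2, j2 < j1, j1 != j & j2 != j].
Proof.
have oE m : m <= 3 -> (inord m : 'I_n) = m :> nat by move=> m3; rewrite inordK //; lia.
have [j1|j1] := eqVneq (j : nat) 1.
  by exists (inord 3), (inord 2); rewrite -!val_eqE /= !oE //; split; lia.
have [j2|j2] := eqVneq (j : nat) 2.
  by exists (inord 3), (inord 1); rewrite -!val_eqE /= !oE //; split; lia.
by exists (inord 2), (inord 1); rewrite -!val_eqE /= !oE //; split; lia.
Qed.

Lemma special_val (a b l : 'I_n) : l != ord0 ->
  special a b l = (if l == b then p.-1 else if l == a then 0 else p) :> nat.
Proof.
by move=> l0; rewrite specialE ffunE (negbTE l0); case: ifP => _; rewrite ?top1E //; case: ifP.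
Qed.

Lemma extra_upd_pred (x : V) j (b : 'I_r) : j != ord0 -> x \in extra -> x j = b.+1 :> nat ->
  upd x j b \in extra.
Proof.
move=> j0; rewrite !inE updE (eq_sym ord0) (negbTE j0) => /andP [-> deep] xj /=.
have := defect_upd x b j0; have := ltn_ord (x j); rewrite xj => ? ?.
by case/orP: deep => [?|/is_special_props [_ ?]]; apply/orP; left; lia.
Qed.

(* The witness has defect [p + 2]; raising its [j]-th coordinate gives defect [p + 1] with the
   values [p - 1 - b] at [j1] and [p - 1] at [j2 < j1], which is not a special vertex. *)
Lemma extra_witness (j : 'I_n) (b b' : 'I_r) : j != ord0 -> b' = b.+1 :> nat ->
  exists2 w, w \in extra :&: fiber j b & upd w j b' \notin extra.
Proof.
move=> j0 bb'; have bp : b < p by have := ltn_ord b'; lia.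
have [j1 [j2 [j2pos j21 j1j j2j]]] := two_other_coords j.
have j10 : j1 != ord0 by rewrite ord_neq0; lia.
have j20 : j2 != ord0 by rewrite ord_neq0.
have j21' : (j2 == j1) = false by apply/negbTE; rewrite -val_eqE /=; lia.
pose c : 'I_r := inord (p.-1 - b).
have cE : c = p.-1 - b :> nat by rewrite inordK //; lia.
pose w0 := upd top j b; pose w1 := upd w0 j1 c; pose w := upd w1 j2 top1.
have wE l : w l = if l == j2 then top1 else if l == j1 then c else if l == j then b else top l.
  by rewrite !updE.
have w_defect : defect w = p.+2.
  have := defect_upd top b j0; have := defect_upd w0 c j10; have := defect_upd w1 top1 j20.
  rewrite /w /w1 /w0 defect_top !updE !ffunE j21' (negbTE j1j) (negbTE j2j).
  by rewrite (negbTE j10) (negbTE j20) (negbTE j0) top1E cE /=; lia.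
have wj : w j = b by rewrite wE eq_sym (negbTE j2j) eq_sym (negbTE j1j) eqxx.
exists w.
  rewrite !inE wj eqxx wE ffunE eqxx !(eq_sym ord0) (negbTE j0) (negbTE j10) (negbTE j20).
  by rewrite w_defect leqnn.
have := defect_upd w b' j0; rewrite w_defect wj bb' => defect_w'.
rewrite inE negb_and negb_or -ltnNge; apply/orP; right; apply/andP; split; first lia.
apply/negP=> /existsP [a0 /existsP [b0 /and3P [a0pos ab /eqP /ffunP E]]].
have e1 := E j1; have e2 := E j2.
rewrite updE (negbTE j1j) wE eq_sym j21' eqxx in e1; rewrite updE (negbTE j2j) wE eqxx in e2.
move/(congr1 (@nat_of_ord _)): e1; move/(congr1 (@nat_of_ord _)): e2.
rewrite !special_val // top1E cE.
have [j2b0|] := eqVneq j2 b0; last by case: ifP; lia.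
rewrite -j2b0 (eq_sym j1) j21'; case: (eqVneq j1 a0) => [a0j1|]; last lia.
by move: ab; rewrite -a0j1 -j2b0; lia.
Qed.

Lemma count_extra_succ j (b b' : 'I_r) : j != ord0 -> b' = b.+1 :> nat ->
  count_extra j b' < count_extra j b.
Proof.
move=> j0 bb'.
have inj := sub_in2 (subsetP (subsetIr extra _)) (upd_fiber_inj (i := j) (a := b') (b := b)).
rewrite /count_extra -(card_in_imset inj); apply: proper_card; rewrite properE.
apply/andP; split.
  apply/subsetP=> _ /imsetP [x /setIP [xE /[!in_fiber] /eqP xj] ->].
  rewrite inE in_fiber updE !eqxx andbT; apply: extra_upd_pred => //.
  by rewrite xj bb'.
have [w wF wE] := extra_witness j0 bb'; apply/subsetPn; exists w => //.
apply: contra wE => /imsetP [x /setIP [xE /[!in_fiber] /eqP xj] ->].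
by rewrite upd_upd -xj upd_id.
Qed.

Lemma count_extra_decr j : j != ord0 -> {homo count_extra j : b b' /~ b < b'}.
Proof.
move=> j0 b b' bb'; rewrite -[b]inord_val -[b']inord_val.
apply: (@homo_ltn_in nat [pred m | m < r] (fun m => count_extra j (inord m)) (fun x y => y < x));
  rewrite ?inE ?ltn_ord //.
- by move=> y x z xy yz; apply: ltn_trans xy.
- by move=> m m' _ m'r l /andP [_ lm']; apply: ltn_trans m'r.
by move=> m _ m1r; apply: count_extra_succ; rewrite // !inordK // ltnW.
Qed.

Definition deficient (j : 'I_n) : {set V} :=
  [set x : V | [&& x ord0 == ord0, p.+2 <= defect x & x j == ord0]].

Lemma special_fiber0 (j : 'I_n) : j != ord0 ->
  [set x | is_special x & x j == ord0] = [set special j l | l in [set l : 'I_n | j < l]].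
Proof.
move=> j0; apply/setP=> x; rewrite inE; apply/andP/imsetP.
  move=> [/existsP [a /existsP [b /and3P [a0 ab /eqP xE]]] /eqP]; rewrite xE.
  move/(congr1 (@nat_of_ord _)); rewrite special_val //=.
  case: eqVneq => [_|_]; first lia.
  by case: eqVneq => [ja _|_]; [exists b; rewrite ?inE ?ja | lia].
move=> [l /[!inE] jl ->]; split.
  by apply/existsP; exists j; apply/existsP; exists l; rewrite -ord_neq0 j0 jl eqxx.
apply/eqP/ord_inj; rewrite special_val //= eqxx; case: eqVneq => // jl'.
by rewrite jl' ltnn in jl.
Qed.

Lemma card_special_fiber0 (j : 'I_n) : j != ord0 ->
  #|[set x | is_special x & x j == ord0]| = #|[set l : 'I_n | j < l]|.
Proof.
move=> j0; rewrite special_fiber0 // card_in_imset // => l l' /[!inE] jl jl' /ffunP /(_ l).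
have l0 : l != ord0 by rewrite ord_neq0; lia.
move/(congr1 (@nat_of_ord _)); rewrite !special_val // eqxx; have lj : (l == j) = false.
  by apply/negbTE; rewrite -val_eqE /= neq_ltn jl orbT.
by rewrite lj; case: eqVneq => // _; lia.
Qed.

Lemma count_extra0 j : j != ord0 ->
  count_extra j ord0 = #|deficient j| + #|[set l : 'I_n | j < l]|.
Proof.
move=> j0; rewrite -card_special_fiber0 // /count_extra -cardsUI.
have -> : deficient j :&: [set x | is_special x & x j == ord0] = set0.
  apply/setP=> x; rewrite !inE; apply/negbTE/negP.
  by move=> /and3P [/and3P [_ deep _] /is_special_props [_ dx]]; rewrite dx ltnn in deep.
rewrite cards0 addn0; apply: eq_card => x; rewrite !inE.
case: (boolP (is_special x)) => [/is_special_props [-> ->]|_]; first by rewrite ltnn andbT.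
by rewrite orbF andFb orbF -andbA.
Qed.

Lemma defect_swap (i i' : 'I_n) (x : V) : i != ord0 -> i' != ord0 ->
  defect (swap_coords i i' x) = defect x.
Proof.
move=> i0 i'0; rewrite /defect [RHS](reindex_inj (@perm_inj _ (tperm i i'))) /=.
apply: eq_big => [l|l _]; last by rewrite ffunE.
by rewrite -[in RHS](tpermD i0 i'0) (inj_eq perm_inj).
Qed.

Lemma card_deficient i i' : i != ord0 -> i' != ord0 -> #|deficient i| = #|deficient i'|.
Proof.
move=> i0 i'0; have swap0 : tperm i i' ord0 = ord0 by rewrite tpermD // eq_sym.
have -> : deficient i' = swap_coords i i' @: deficient i.
  apply/setP=> y; apply/idP/imsetP => [|[x]].
    rewrite inE => /and3P [y0 deep yi]; exists (swap_coords i i' y); last by rewrite swap_coordsK.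
    by rewrite inE !ffunE swap0 y0 defect_swap // deep tpermL.
  by rewrite !inE => /and3P [x0 deep xi] ->; rewrite !ffunE swap0 x0 defect_swap // deep tpermR.
by rewrite (card_imset _ (can_inj (swap_coordsK i i'))).
Qed.

Lemma count_extra0_decr i i' : i != ord0 -> i' != ord0 -> i < i' ->
  count_extra i' ord0 < count_extra i ord0.
Proof.
move=> i0 i'0 ii'; rewrite !count_extra0 // (card_deficient i'0 i0) ltn_add2l.
apply: proper_card; rewrite properE; apply/andP; split.
  by apply/subsetP=> l; rewrite !inE; apply: ltn_trans.
by apply/subsetPn; exists i'; rewrite !inE ?ltnn.
Qed.

Section Distinguishing.
Variable f : {perm V}.
Hypothesis f_aut : is_graph_aut adj f.
Hypothesis f_col : forall x, extra_coloring (f x) = extra_coloring x.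

Lemma aut_color_class c :
  f @: [set x | extra_coloring x == c] = [set x | extra_coloring x == c].
Proof.
apply/eqP; rewrite eqEcard card_imset ?leqnn ?andbT; last exact: perm_inj.
by apply/subsetP=> _ /imsetP [x xc ->]; rewrite !inE f_col in xc *.
Qed.

Lemma aut_count_extra (A : {set V}) : #|f @: A :&: extra| = #|A :&: extra|.
Proof.
rewrite -extra_coloring_class_max -{1}aut_color_class -(imsetI (in2W (@perm_inj _ f))).
by rewrite card_imset //; apply: perm_inj.
Qed.

Lemma aut_fiber0 a : f @: fiber ord0 a = fiber ord0 a.
Proof.
have fix_nz c : c != ord0 -> f @: fiber ord0 c = fiber ord0 c.
  by move=> c0; rewrite -extra_coloring_class // aut_color_class.
have [-> {a}|/fix_nz //] := eqVneq a ord0.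
have [j [s Fs]] := aut_fibers r_ge3 ord0 f_aut.
have [j0 _] := fiber_inj r_ge3 (etrans (esym (Fs (z1 p))) (fix_nz _ (z1_neq0 r_ge3))).
rewrite Fs -j0; have [-> //|s0] := eqVneq (s ord0) ord0.
have : f @: fiber ord0 ord0 = f @: fiber ord0 (s ord0) by rewrite Fs fix_nz // j0.
by move=> /(imset_inj (@perm_inj _ f)) /(fiber_inj r_ge3) [_ s0']; rewrite -s0' eqxx in s0.
Qed.

(* Over a coordinate [i != ord0] the numbers of extra vertices in the fibers decrease strictly,
   which pins down the value permutation; at value [ord0] they also decrease with [i]. *)
Lemma aut_fiber i a : f @: fiber i a = fiber i a.
Proof.
have [->|i0] := eqVneq i ord0; first exact: aut_fiber0.
have [j [s Fs]] := aut_fibers r_ge3 i f_aut.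
have j0 : j != ord0.
  apply/eqP=> j0; have := Fs ord0; rewrite j0 -aut_fiber0.
  by move=> /(imset_inj (@perm_inj _ f)) /(fiber_inj r_ge3) [i0']; rewrite i0' eqxx in i0.
have count_s b : count_extra j (s b) = count_extra i b.
  by rewrite /count_extra setIC -Fs aut_count_extra setIC.
have s_id : s =1 id.
  apply: incr_ord_id => b b' bb'; have := count_extra_decr i0 bb'; rewrite -!count_s.
  by case: (ltngtP (s b) (s b')) => // [/(count_extra_decr j0)|/ord_inj ->]; lia.
have ij : i = j.
  have := count_s ord0; rewrite s_id /= => count0.
  case: (ltngtP i j) => [/(count_extra0_decr i0 j0)|/(count_extra0_decr j0 i0)|/val_inj //].
    by rewrite count0 ltnn.
  by rewrite count0 ltnn.
by rewrite Fs s_id ij.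
Qed.

End Distinguishing.

Lemma extra_coloring_distinguishing : distinguishing adj extra_coloring.
Proof. by move=> f f_aut f_col; apply: perm_fixing_fibers => i a; apply: aut_fiber. Qed.

End UpperBound.

Theorem mainTheorem7 (r n : nat) (hr : 3 <= r) (hn : 4 <= n) :
  chi_D_eq (@Kpow_adj r n) r.+1.
Proof.
case: r hr => [|p] // r_ge3; case: n hn => [|k] // n_ge4; split.
  exists (extra_coloring (k:=k)); split; first exact: extra_coloring_proper.
  exact: extra_coloring_distinguishing.
have n_ge2 : 0 < k by lia.
by move=> m [c [c_proper c_dist]]; apply: proper_distinguishing_gt c_proper c_dist.
Qed.
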